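(* Let $\mathcal V$ be a complex vector space, $\Omega\subseteq\mathcal V_{\mathrm{nc}}$ a finitely open nc set, $\mathcal W$ a complex Banach space with an admissible system of matrix norms, $f:\Omega\to\mathcal W_{\mathrm{nc}}$ a G-differentiable nc function, $s\in\mathbb N$ and $Y\in\Omega_s$. Suppose that $$f(X)=\sum_{\ell=0}^\infty\Bigl(X-\bigoplus_{\alpha=1}^mY\Bigr)^{\odot_s\ell}f_\ell\qquad(X\in\Gamma\cap\mathcal V^{sm\times sm},\ m=1,2,\dots),$$ where $\Gamma$ is a finitely open subset of $\Omega$ which contains $\bigoplus_{\alpha=1}^mY$ for every $m\in\mathbb N$, and $f_\ell:(\mathcal V^{s\times s})^\ell\to\mathcal W^{s\times s}$ is $\ell$-linear for each $\ell=0,1,\dots$. Then $f_\ell=\Delta_R^\ell f(Y,\dots,Y)$ ($\ell+1$ arguments) for every $\ell$.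
   Context: $\mathcal V_{\mathrm{nc}}=\coprod_n\mathcal V^{n\times n}$; complex matrices act on matrices over $\mathcal V,\mathcal W$ by multiplication; $X\oplus Y=\begin{bmatrix}X&0\\0&Y\end{bmatrix}$. A nc set is a subset closed under direct sums, $\Omega_n=\Omega\cap\mathcal V^{n\times n}$; a nc function satisfies $f(\Omega_n)\subseteq\mathcal W^{n\times n}$, $f(X\oplus Y)=f(X)\oplus f(Y)$, $f(SXS^{-1})=Sf(X)S^{-1}$ for invertible $S\in\mathbb C^{n\times n}$ with $X,SXS^{-1}\in\Omega_n$. A subset of $\mathcal V_{\mathrm{nc}}$ is finitely open if its intersection with every finite-dimensional subspace $\mathcal U$ of any $\mathcal V^{n\times n}$ is Euclidean-open in $\mathcal U$. An admissible system of matrix norms over $\mathcal W$ is a sequence of norms $\|\cdot\|_n$ on $\mathcal W^{n\times n}$ with constants $C_1(n,m),C_1'(n,m),C_2(n)>0$ such that $C_1(n,m)^{-1}\max\{\|X\|_n,\|Y\|_m\}\le\|X\oplus Y\|_{n+m}\le C_1'(n,m)\max\{\|X\|_n,\|Y\|_m\}$ and $\|SXT\|_n\le C_2(n)\|S\|\|X\|_n\|T\|$. $f$ is G-differentiable if $\lim_{t\to0}(f(X+tZ)-f(X))/t$ exists in $\mathcal W^{n\times n}$ for all $X\in\Omega_n$, $Z\in\mathcal V^{n\times n}$. For $W\in\mathcal V^{sm\times sm}$ viewed as an $m\times m$ matrix of blocks $W_{ij}\in\mathcal V^{s\times s}$, $W^{\odot_s\ell}$ is the $m\times m$ matrix over $(\mathcal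 V^{s\times s})^{\otimes\ell}$ with $(i,k)$ entry $\sum_{j_1,\dots,j_{\ell-1}}W_{ij_1}\otimes\cdots\otimes W_{j_{\ell-1}k}$, $W^{\odot_s\ell}f_\ell\in\mathcal W^{sm\times sm}$ applies $f_\ell$ entrywise, and $W^{\odot_s0}f_0=\bigoplus_{\alpha=1}^mf_0$; the series converges in norm. Higher order operators: finitely open nc sets are right admissible; with $\tilde\Omega=\{SXS^{-1}\}$ and $\tilde f(SXS^{-1})=Sf(X)S^{-1}$ the unique nc extension, for $X^j\in\Omega_{n_j}$, $Z^j\in\mathcal V^{n_{j-1}\times n_j}$, the block upper bidiagonal matrix $B$ with diagonal $X^0,\dots,X^\ell$ and superdiagonal $Z^1,\dots,Z^\ell$ lies in $\tilde\Omega$ and $\Delta_R^\ell f(X^0,\dots,X^\ell)(Z^1,\dots,Z^\ell)$ is the $(1,\ell+1)$ block of $\tilde f(B)$ ($\Delta_R^0f=f$). *)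

From HB Require Import structures.
From mathcomp Require Import all_boot all_order all_algebra.
From mathcomp Require Import complex.
From mathcomp Require Import all_classical all_reals all_analysis.
Set Implicit Arguments. Unset Strict Implicit. Unset Printing Implicit Defensive.
Import Order.TTheory GRing.Theory Num.Theory ComplexField.
Local Open Scope ring_scope.

Section NCDefs.
Variable R : realType.
Local Notation C := (R[i]).

(* size of an (m x m)-block matrix with (s x s) blocks: s*m *)
Definition bsz (m s : nat) : nat := (\sum_(a < m) s)%N.

Definition smulmx (U : lmodType C) (m n p : nat) (S : 'M[C]_(m, n))
  (X : 'M[U]_(n, p)) : 'M[U]_(m, p) :=
  \matrix_(i, j) \sum_(k < n) S i k *: X k j.
Definition mulmxs (U : lmodType C) (m n p : nat) (X : 'M[U]_(m, n))
  (T : 'M[C]_(n, p)) : 'M[U]_(m, p) :=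
  \matrix_(i, j) \sum_(k < n) T k j *: X i k.
Definition scalemxl (U : lmodType C) (m n : nat) (a : C) (X : 'M[U]_(m, n))
  : 'M[U]_(m, n) := map_mx (fun x => a *: x) X.
Definition simil (U : lmodType C) (n : nat) (S : 'M[C]_n) (X : 'M[U]_n)
  : 'M[U]_n := smulmx S (mulmxs X (invmx S)).

Definition dsum (U : zmodType) (n m : nat) (X : 'M[U]_n) (Y : 'M[U]_m)
  : 'M[U]_(n + m) := block_mx X 0 0 Y.

Definition dsumn (U : zmodType) (m s : nat) (Y : 'M[U]_s) : 'M[U]_(bsz m s) :=
  @mxdiag U m (fun=> s) (fun=> Y).

Definition blk (U : Type) (m s : nat) (X : 'M[U]_(bsz m s)) (a b : 'I_m)
  : 'M[U]_s := @submxblock U m m (fun=> s) (fun=> s) X a b.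

(* subsets of U_nc = coprod_n U^{n x n} *)
Definition ncsubset (U : Type) := forall n : nat, set 'M[U]_n.

Definition is_ncset (U : zmodType) (O : ncsubset U) : Prop :=
  forall n m (X : 'M[U]_n) (Y : 'M[U]_m), (0 < n)%N -> (0 < m)%N ->
    O n X -> O m Y -> O (n + m)%N (dsum X Y).

(* finitely open: the intersection with every finite-dimensional subspace
   of U^{n x n} is Euclidean open in it; written out in coordinates
   X + sum_i t_i Z_i with respect to a finite spanning family Z *)
Definition finitely_open (U : lmodType C) (O : ncsubset U) : Prop :=
  forall n (X : 'M[U]_n) (k : nat) (Z : 'I_k -> 'M[U]_n), (0 < n)%N ->
    O n X -> exists eps : C, 0 < eps /\
      forall t : 'I_k -> C, (forall i, `|t i| < eps) ->
        O n (X + \sum_(i < k) scalemxl (t i) (Z i)).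

Definition is_ncfun (U Wt : lmodType C) (O : ncsubset U)
  (f : forall n, 'M[U]_n -> 'M[Wt]_n) : Prop :=
  (forall n m (X : 'M[U]_n) (Y : 'M[U]_m), (0 < n)%N -> (0 < m)%N ->
     O n X -> O m Y -> f (n + m)%N (dsum X Y) = dsum (f n X) (f m Y)) /\
  (forall n (S : 'M[C]_n) (X : 'M[U]_n), (0 < n)%N -> S \in unitmx ->
     O n X -> O n (simil S X) -> f n (simil S X) = simil S (f n X)).

(* a norm (values in C, necessarily real and nonnegative) *)
Definition is_norm (U : lmodType C) (n : nat) (nu : 'M[U]_n -> C) : Prop :=
  (forall x, 0 <= nu x) /\ (forall x, nu x = 0 -> x = 0) /\
  (forall a x, nu (scalemxl a x) = `|a| * nu x) /\
  (forall x y, nu (x + y) <= nu x + nu y).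

(* a norm on C^{n x n} (all such norms are equivalent) *)
Definition cmxnorm (n : nat) (S : 'M[C]_n) : C :=
  \sum_(i < n) \sum_(j < n) `|S i j|.

Definition admissible (Wt : lmodType C) (N : forall n, 'M[Wt]_n -> C) : Prop :=
  (forall n, (0 < n)%N -> is_norm (N n)) /\
  (forall n m, (0 < n)%N -> (0 < m)%N -> exists c1 c1' : C, 0 < c1 /\ 0 < c1' /\
     forall (X : 'M[Wt]_n) (Y : 'M[Wt]_m),
       c1^-1 * Num.max (N n X) (N m Y) <= N (n + m)%N (dsum X Y) /\
       N (n + m)%N (dsum X Y) <= c1' * Num.max (N n X) (N m Y)) /\
  (forall n, (0 < n)%N -> exists c2 : C, 0 < c2 /\
     forall (S T : 'M[C]_n) (X : 'M[Wt]_n),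
       N n (smulmx S (mulmxs X T)) <= c2 * cmxnorm S * N n X * cmxnorm T).

Definition G_differentiable (U Wt : lmodType C) (O : ncsubset U)
  (f : forall n, 'M[U]_n -> 'M[Wt]_n) (N : forall n, 'M[Wt]_n -> C) : Prop :=
  forall n (X Z : 'M[U]_n), (0 < n)%N -> O n X ->
    exists D : 'M[Wt]_n, forall eps : C, 0 < eps -> exists delta : C,
      0 < delta /\ forall t : C, t != 0 -> `|t| < delta -> O n (X + scalemxl t Z) ->
        N n (scalemxl t^-1 (f n (X + scalemxl t Z) - f n X) - D) < eps.

Definition multilinear (U Wt : lmodType C) (s l : nat)
  (g : ('I_l -> 'M[U]_s) -> 'M[Wt]_s) : Prop :=
  forall (i : 'I_l) (x : 'I_l -> 'M[U]_s) (a : C) (u v : 'M[U]_s),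
    g (fun j => if j == i then scalemxl a u + v else x j) =
    scalemxl a (g (fun j => if j == i then u else x j)) +
    g (fun j => if j == i then v else x j).

(* W^{(.)_s l} f_l : the (a,b) block is
   sum_{j_1..j_{l-1}} f_l(W_{a j_1}, W_{j_1 j_2}, ..., W_{j_{l-1} b});
   for l = 0 this gives (+)_{alpha=1}^m f_0 *)
Definition odot_apply (U Wt : lmodType C) (m s l : nat)
  (Wm : 'M[U]_(bsz m s)) (fl : ('I_l -> 'M[U]_s) -> 'M[Wt]_s)
  : 'M[Wt]_(bsz m s) :=
  @mxblock Wt m m (fun=> s) (fun=> s) (fun a b =>
    \sum_(p : {ffun 'I_l.+1 -> 'I_m} | (p ord0 == a) && (p ord_max == b))
      fl (fun t : 'I_l => blk Wm (p (widen_ord (leqnSn l) t)) (p (lift ord0 t)))).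

(* the block upper bidiagonal matrix with diagonal Y,...,Y (l+1 times) and
   superdiagonal Z_1, ..., Z_l *)
Definition bidiag (U : zmodType) (s l : nat) (Y : 'M[U]_s)
  (Z : 'I_l -> 'M[U]_s) : 'M[U]_(bsz l.+1 s) :=
  @mxblock U l.+1 l.+1 (fun=> s) (fun=> s) (fun a b =>
    if b == a then Y
    else if (b == a.+1 :> nat) then
      (if (insub (a : nat) : option 'I_l) is Some i then Z i else 0)
    else 0).

End NCDefs.

From HB Require Import structures.
From mathcomp Require Import all_boot all_order all_algebra.
From mathcomp Require Import complex.
From mathcomp Require Import all_classical all_reals all_analysis.
Import Order.TTheory GRing.Theory Num.Theory ComplexField.
Set Implicit Arguments. Unset Strict Implicit. Unset Printing Implicit Defensive.
Local Open Scope ring_scope.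

(* Conjugating the block bidiagonal matrix B with diagonal Y and superdiagonal Z
   by D = diag(1, t^-1, ..., t^-l) gives (+)Y + t E, where E is the superdiagonal
   part of B; for small t != 0 this point lies in Gamma, so the series applies.
   In the (0, l) block of (t E)^{(.)_s j} f_j only the chain of blocks 0, 1, ..., l
   survives, so the series contributes t^l f_l(Z) and nothing else.  On the other
   hand, by the similarity invariance of f, f((+)Y + t E) is D (S f(X) S^-1) D^-1,
   whose (0, l) block is t^l times that of S f(X) S^-1.  Since the series converges
   in an admissible norm, the (0, l) block of its limit is read off termwise. *)

Section MatrixAction.
Variables (R : realType) (U : lmodType R[i]).

Lemma smulmxA m n p q (P : 'M[R[i]]_(m, n)) (S : 'M[R[i]]_(n, p))
    (X : 'M[U]_(p, q)) :
  smulmx P (smulmx S X) = smulmx (P *m S) X.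
Proof.
apply/matrixP => i j; rewrite !mxE.
under eq_bigr do rewrite mxE scaler_sumr.
rewrite exchange_big /=; apply: eq_bigr => r _.
by rewrite mxE scaler_suml; apply: eq_bigr => k _; rewrite scalerA.
Qed.

Lemma mulmxsA m n p q (X : 'M[U]_(m, n)) (T1 : 'M[R[i]]_(n, p))
    (T2 : 'M[R[i]]_(p, q)) :
  mulmxs (mulmxs X T1) T2 = mulmxs X (T1 *m T2).
Proof.
apply/matrixP => i j; rewrite !mxE.
under eq_bigr do rewrite mxE scaler_sumr.
rewrite exchange_big /=; apply: eq_bigr => r _.
by rewrite mxE scaler_suml; apply: eq_bigr => k _; rewrite scalerA mulrC.
Qed.

Lemma smulmx_mulmxsA m n p q (S : 'M[R[i]]_(m, n)) (X : 'M[U]_(n, p))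
    (T : 'M[R[i]]_(p, q)) :
  smulmx S (mulmxs X T) = mulmxs (smulmx S X) T.
Proof.
apply/matrixP => i j; rewrite !mxE.
under eq_bigr do rewrite mxE scaler_sumr.
under [RHS]eq_bigr do rewrite mxE scaler_sumr.
rewrite exchange_big /=; apply: eq_bigr => r _.
by apply: eq_bigr => k _; rewrite !scalerA mulrC.
Qed.

Lemma smul1mx n p (X : 'M[U]_(n, p)) : smulmx 1%:M X = X.
Proof.
apply/matrixP => i j; rewrite mxE (bigD1 i) //= mxE eqxx scale1r big1 ?addr0 //.
by move=> k /negbTE ki; rewrite mxE eq_sym ki scale0r.
Qed.

Lemma mulmxs1 n p (X : 'M[U]_(n, p)) : mulmxs X 1%:M = X.
Proof.
apply/matrixP => i j; rewrite mxE (bigD1 j) //= mxE eqxx scale1r big1 ?addr0 //.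
by move=> k /negbTE kj; rewrite mxE kj scale0r.
Qed.

Lemma invmx_eq n (A B : 'M[R[i]]_n) : A *m B = 1%:M -> invmx A = B.
Proof.
by move=> AB; have [uA _] := mulmx1_unit AB; rewrite -[RHS](mulKmx uA) AB mulmx1.
Qed.

Lemma invmxM n (P S : 'M[R[i]]_n) : P \in unitmx -> S \in unitmx ->
  invmx (P *m S) = invmx S *m invmx P.
Proof.
move=> uP uS; apply: invmx_eq.
by rewrite mulmxA -(mulmxA P) mulmxV // mulmx1 mulmxV.
Qed.

Lemma similM n (P S : 'M[R[i]]_n) (X : 'M[U]_n) :
  P \in unitmx -> S \in unitmx -> simil P (simil S X) = simil (P *m S) X.
Proof.
move=> uP uS; rewrite /simil invmxM //.
by rewrite -[mulmxs (smulmx _ _) _]smulmx_mulmxsA smulmxA mulmxsA.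
Qed.

Lemma similK n (S : 'M[R[i]]_n) (X : 'M[U]_n) :
  S \in unitmx -> simil (invmx S) (simil S X) = X.
Proof.
move=> uS; rewrite similM ?unitmx_inv // mulVmx // /simil invmx1.
by rewrite mulmxs1 smul1mx.
Qed.

Lemma smulmx_diag n p (d : 'rV[R[i]]_n) (X : 'M[U]_(n, p)) :
  smulmx (diag_mx d) X = \matrix_(i, j) (d 0 i *: X i j).
Proof.
apply/matrixP => i j; rewrite !mxE (bigD1 i) //= mxE eqxx mulr1n big1 ?addr0 //.
by move=> k /negbTE ki; rewrite mxE eq_sym ki mulr0n scale0r.
Qed.

Lemma mulmxs_diag n p (d : 'rV[R[i]]_p) (X : 'M[U]_(n, p)) :
  mulmxs X (diag_mx d) = \matrix_(i, j) (d 0 j *: X i j).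
Proof.
apply/matrixP => i j; rewrite !mxE (bigD1 j) //= mxE eqxx mulr1n big1 ?addr0 //.
by move=> k /negbTE kj; rewrite mxE kj mulr0n scale0r.
Qed.

Lemma invmx_diag n (d : 'rV[R[i]]_n) : (forall i, d 0 i != 0) ->
  diag_mx d \in unitmx /\ invmx (diag_mx d) = diag_mx (\row_i (d 0 i)^-1).
Proof.
move=> d_neq0.
have dVd : diag_mx d *m diag_mx (\row_i (d 0 i)^-1) = 1%:M.
  rewrite mulmx_diag -diag_const_mx; congr diag_mx.
  by apply/rowP => i; rewrite !mxE mulfV.
by split; [case: (mulmx1_unit dVd) | exact: invmx_eq].
Qed.

Lemma simil_diag n (d : 'rV[R[i]]_n) (X : 'M[U]_n) : (forall i, d 0 i != 0) ->
  simil (diag_mx d) X = \matrix_(i, j) ((d 0 i / d 0 j) *: X i j).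
Proof.
move=> /invmx_diag[_ dV]; rewrite /simil dV mulmxs_diag smulmx_diag.
by apply/matrixP => i j; rewrite !mxE scalerA.
Qed.

Lemma scalemxl1 m n (X : 'M[U]_(m, n)) : scalemxl 1 X = X.
Proof. by apply/matrixP => i j; rewrite mxE scale1r. Qed.

Lemma scalemxl0 m n (a : R[i]) : scalemxl a (0 : 'M[U]_(m, n)) = 0.
Proof. by apply/matrixP => i j; rewrite !mxE scaler0. Qed.

Lemma scalemxlA m n (a b : R[i]) (X : 'M[U]_(m, n)) :
  scalemxl a (scalemxl b X) = scalemxl (a * b) X.
Proof. by apply/matrixP => i j; rewrite !mxE scalerA. Qed.

Lemma scalemxlK m n (a : R[i]) : a != 0 -> cancel (@scalemxl _ U m n a) (scalemxl a^-1).
Proof. by move=> a0 X; rewrite scalemxlA mulVf // scalemxl1. Qed.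

End MatrixAction.

Section BlockIndex.
Variables m s : nat.

Definition bnum (k : 'I_(bsz m s)) : 'I_m := @tagnat.sig1 m (fun=> s) k.
Definition boff (k : 'I_(bsz m s)) : 'I_s := @tagnat.sig2 m (fun=> s) k.
Definition brank (a : 'I_m) (i : 'I_s) : 'I_(bsz m s) :=
  @tagnat.Rank m (fun=> s) a i.

Lemma bnum_rank a i : bnum (brank a i) = a.
Proof. exact: tagnat.Rank1K. Qed.

Lemma boff_rank a i : boff (brank a i) = i.
Proof. by apply/val_inj; rewrite /boff /brank tagnat.Rank2K. Qed.

Lemma brankK k : brank (bnum k) (boff k) = k.
Proof. exact: tagnat.sig2K. Qed.

Lemma blkE (U : Type) (H : 'M[U]_(bsz m s)) a b i j :
  blk H a b i j = H (brank a i) (brank b j).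
Proof. by rewrite mxE. Qed.

Lemma blk_mxblock (U : Type) (F : 'I_m -> 'I_m -> 'M[U]_s) a b :
  blk (@mxblock U m m (fun=> s) (fun=> s) F) a b = F a b.
Proof. exact: mxblockK. Qed.

Lemma blk_sum (U : zmodType) k (F : 'I_k -> 'M[U]_(bsz m s)) a b :
  blk (\sum_(j < k) F j) a b = \sum_(j < k) blk (F j) a b.
Proof. exact: submxblock_sum. Qed.

Lemma dsumnE (U : zmodType) (Y : 'M[U]_s) k l :
  dsumn m Y k l = if bnum k == bnum l then Y (boff k) (boff l) else 0.
Proof.
rewrite /dsumn /mxdiag mxE -/(bnum k) -/(bnum l).
by case: eqP => _; rewrite ?conform_mx_id ?mxE.
Qed.

End BlockIndex.

Arguments bnum {m s} k.
Arguments boff {m s} k.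
Arguments brank {m s} a i.

Lemma bidiagE (U : zmodType) s l (Y : 'M[U]_s) (Z : 'I_l -> 'M[U]_s) k k' :
  bidiag Y Z k k' =
  if bnum k' == bnum k then Y (boff k) (boff k')
  else if bnum k' == (bnum k).+1 :> nat then
    (if insub (bnum k : nat) is Some i then Z i (boff k) (boff k') else 0)
  else 0.
Proof.
rewrite /bidiag mxE -/(bnum k) -/(bnum k') -/(boff k) -/(boff k').
case: eqP => _ //; case: eqP => _; last by rewrite mxE.
by case: insub => [i|]; rewrite ?mxE.
Qed.

Section BlockScaling.
Variables (R : realType) (U : lmodType R[i]).

Definition blkscale m s (t : R[i]) : 'M[R[i]]_(bsz m s) :=
  diag_mx (\row_k t ^- bnum k).

Variables (m s : nat) (t : R[i]).
Hypothesis t_neq0 : t != 0.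

Let blkscale_neq0 k : (\row_k t ^- @bnum m s k) 0 k != 0.
Proof. by rewrite mxE invr_eq0 expf_neq0. Qed.

Lemma blkscale_unit : blkscale m s t \in unitmx.
Proof. by have [] := invmx_diag blkscale_neq0. Qed.

Lemma simil_blkscale (X : 'M[U]_(bsz m s)) :
  simil (blkscale m s t) X =
  \matrix_(k, l) ((t ^+ bnum l / t ^+ bnum k) *: X k l).
Proof.
rewrite simil_diag //; apply/matrixP => k l; by rewrite !mxE invrK mulrC.
Qed.

Lemma blk_simil_blkscale (H : 'M[U]_(bsz m s)) a b :
  blk (simil (blkscale m s t) H) a b = scalemxl (t ^+ b / t ^+ a) (blk H a b).
Proof.
by apply/matrixP => i j; rewrite blkE simil_blkscale !mxE !bnum_rank.
Qed.

End BlockScaling.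

Lemma simil_blkscale_bidiag (R : realType) (V : lmodType R[i]) s l
    (Y : 'M[V]_s) (Z : 'I_l -> 'M[V]_s) (t : R[i]) : t != 0 ->
  simil (blkscale l.+1 s t) (bidiag Y Z) =
  dsumn l.+1 Y + scalemxl t (bidiag 0 Z).
Proof.
move=> t0; rewrite simil_blkscale //; apply/matrixP => k k'.
rewrite [LHS]mxE [RHS]mxE dsumnE [X in _ + X]mxE !bidiagE.
have tn0 n : t ^+ n != 0 by rewrite expf_neq0.
case: eqP => [->|ne].
  by rewrite eqxx mulfV // scale1r mxE scaler0 addr0.
have /negbTE -> : bnum k != bnum k' by apply/eqP => e; apply: ne.
rewrite add0r; case: eqP => [->|_]; last by rewrite !scaler0.
by rewrite exprS mulfK.
Qed.

Section Multilinear.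
Variables (R : realType) (U W : lmodType R[i]) (s l : nat).
Variable g : ('I_l -> 'M[U]_s) -> 'M[W]_s.
Hypothesis g_ml : multilinear g.

Let upd (x : 'I_l -> 'M[U]_s) i v j := if j == i then v else x j.

Let multilinear_upd0 x i : g (upd x i 0) = 0.
Proof.
have := g_ml i x 1 0 0; rewrite scalemxl0 addr0 scalemxl1 -[LHS]addr0 => /addrI.
by move->.
Qed.

Let multilinear_updZ x i a u :
  g (upd x i (scalemxl a u)) = scalemxl a (g (upd x i u)).
Proof. by have := g_ml i x a u 0; rewrite !addr0 -/(upd x i 0) multilinear_upd0 addr0. Qed.

Lemma multilinear_eq0 x i : x i = 0 -> g x = 0.
Proof.
move=> xi0; rewrite -[RHS](multilinear_upd0 x i); congr g.
by apply: funext => j; rewrite /upd; case: eqP => [->|].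
Qed.

Lemma multilinearZ c x : g (fun u => scalemxl c (x u)) = scalemxl (c ^+ l) (g x).
Proof.
pose xk k (u : 'I_l) := if (u < k)%N then scalemxl c (x u) else x u.
suff xkE k : (k <= l)%N -> g (xk k) = scalemxl (c ^+ k) (g x).
  by rewrite -xkE //; congr g; apply: funext => u; rewrite /xk ltn_ord.
elim: k => [|k IH] lt_kl.
  by rewrite expr0 scalemxl1; congr g; apply: funext.
pose i := Ordinal lt_kl.
have -> : xk k.+1 = upd (xk k) i (scalemxl c (x i)).
  apply: funext => u; rewrite /upd /xk ltnS leq_eqVlt.
  case: (eqVneq u i) => [->|ne]; first by rewrite eqxx.
  by move: ne; rewrite -val_eqE /= => /negbTE ->.
rewrite multilinear_updZ exprS -scalemxlA -IH; last exact: ltnW.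
congr (scalemxl _ (g _)); apply: funext => u; rewrite /upd /xk.
by case: eqP => [->|]; rewrite ?ltnn.
Qed.

End Multilinear.

Lemma blk_scale_bidiag0 (R : realType) (V : lmodType R[i]) s l
    (Z : 'I_l -> 'M[V]_s) (t : R[i]) (a b : 'I_l.+1) :
  blk (scalemxl t (bidiag 0 Z)) a b =
  if b == a.+1 :> nat then
    (if insub (val a) is Some i then scalemxl t (Z i) else 0)
  else 0.
Proof.
apply/matrixP => i j; rewrite blkE mxE bidiagE !bnum_rank !boff_rank.
case: eqP => [->|_]; first by rewrite ltn_eqF // !mxE scaler0.
case: eqP => _; last by rewrite mxE scaler0.
by case: insub => [k|]; rewrite !mxE ?scaler0.
Qed.

Definition unit_steps j m (p : 'I_j.+1 -> 'I_m) : bool :=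
  [forall u : 'I_j, val (p (lift ord0 u)) == (p (widen_ord (leqnSn j) u)).+1].

Lemma unit_steps_id j m (p : 'I_j.+1 -> 'I_m) :
  val (p ord0) = 0%N -> unit_steps p -> forall k : 'I_j.+1, val (p k) = k.
Proof.
move=> p0 /forallP pS [k lt_kj]; elim: k lt_kj => [|k IH] lt_kj.
  by have -> : Ordinal lt_kj = ord0 by apply/val_inj.
have lt_kj' : (k < j)%N by [].
have -> : Ordinal lt_kj = lift ord0 (Ordinal lt_kj') by apply/val_inj.
rewrite (eqP (pS _)); congr _.+1; rewrite -[RHS](IH (ltnW lt_kj)).
by congr (val (p _)); apply/val_inj.
Qed.

Section OdotCorner.
Variables (R : realType) (V W : lmodType R[i]) (s l : nat).
Variables (Z : 'I_l -> 'M[V]_s) (t : R[i]).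

Let E := scalemxl t (bidiag 0 Z).

Let odot_term_eq0 j (g : ('I_j -> 'M[V]_s) -> 'M[W]_s)
    (p : {ffun 'I_j.+1 -> 'I_l.+1}) :
  multilinear g -> ~~ unit_steps p ->
  g (fun u => blk E (p (widen_ord (leqnSn j) u)) (p (lift ord0 u))) = 0.
Proof.
move=> g_ml /forallPn[u /negbTE Nstep].
by apply: (multilinear_eq0 g_ml (i := u)); rewrite blk_scale_bidiag0 Nstep.
Qed.

Lemma odot_scale_bidiag0_corner (g : ('I_l -> 'M[V]_s) -> 'M[W]_s) :
  multilinear g -> blk (odot_apply E g) ord0 ord_max = scalemxl (t ^+ l) (g Z).
Proof.
move=> g_ml; rewrite /odot_apply blk_mxblock (bigD1 [ffun u => u]) /=; last first.
  by rewrite !ffunE !eqxx.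
rewrite big1 => [|p /andP[/andP[/eqP p0 _] /eqP Nid]]; last first.
  apply: odot_term_eq0 => //; apply/negP => steps; apply: Nid.
  by apply/ffunP => k; apply/val_inj; rewrite ffunE (unit_steps_id (congr1 val p0)).
rewrite addr0 -multilinearZ //; congr g; apply: funext => u.
by rewrite !ffunE blk_scale_bidiag0 /= /bump /= add1n eqxx valK.
Qed.

Lemma odot_scale_bidiag0_corner_eq0 j (g : ('I_j -> 'M[V]_s) -> 'M[W]_s) :
  j != l -> multilinear g -> blk (odot_apply E g) ord0 ord_max = 0.
Proof.
move=> Njl g_ml; rewrite /odot_apply blk_mxblock big1 // => p /andP[/eqP p0 /eqP pl].
have [steps|] := boolP (unit_steps p); last exact: odot_term_eq0.
have := unit_steps_id (congr1 val p0) steps ord_max; rewrite pl /= => eq_lj.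
by rewrite eq_lj eqxx in Njl.
Qed.

End OdotCorner.

Lemma norm_eq0_small (R : realType) (U : lmodType R[i]) n
    (nu : 'M[U]_n -> R[i]) (x : 'M[U]_n) :
  is_norm nu -> (forall e, 0 < e -> nu x < e) -> x = 0.
Proof.
move=> [nu_ge0 [nu_eq0 _]] small; apply: nu_eq0; apply/eqP; apply: contraT => nz.
have /small : 0 < nu x by rewrite lt0r nz nu_ge0.
by rewrite ltxx.
Qed.

Section BlockLimit.
Variables (R : realType) (W : lmodType R[i]) (N : forall n, 'M[W]_n -> R[i]).
Variables (m s : nat) (a b : 'I_m).
Hypotheses (N_adm : admissible N) (ms_gt0 : (0 < bsz m s)%N).

Let indicator (c : 'I_m) : 'M[R[i]]_(bsz m s) :=
  diag_mx (\row_k (bnum k == c)%:R).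

(* Block extraction written as S H T, so that admissibility bounds its norm. *)
Definition blkmask (H : 'M[W]_(bsz m s)) : 'M[W]_(bsz m s) :=
  smulmx (indicator a) (mulmxs H (indicator b)).

Lemma blkmaskE H :
  blkmask H = \matrix_(k, l) (((bnum k == a) && (bnum l == b))%:R *: H k l).
Proof.
rewrite /blkmask mulmxs_diag smulmx_diag; apply/matrixP => k l.
by rewrite !mxE scalerA -natrM mulnb.
Qed.

Lemma blk_blkmask H : blk (blkmask H) a b = blk H a b.
Proof.
by apply/matrixP => i j; rewrite !blkE blkmaskE mxE !bnum_rank !eqxx scale1r.
Qed.

Lemma blkmaskB H H' : blkmask (H - H') = blkmask H - blkmask H'.
Proof. by rewrite !blkmaskE; apply/matrixP => k l; rewrite !mxE scalerBr. Qed.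

Lemma eq_blkmask H H' : blk H a b = blk H' a b -> blkmask H = blkmask H'.
Proof.
move=> eq_ab; rewrite !blkmaskE; apply/matrixP => k l; rewrite !mxE.
case: (eqVneq (bnum k) a) => [ka|]; last by rewrite !scale0r.
case: (eqVneq (bnum l) b) => [lb|]; last by rewrite !scale0r.
by rewrite -(brankK k) -(brankK l) ka lb -!blkE eq_ab.
Qed.

Lemma norm_blkmask_le : exists K, 0 <= K /\ forall H, N (blkmask H) <= K * N H.
Proof.
have [_ [_ N_mul]] := N_adm; have [c2 [c2_gt0 c2_bound]] := N_mul _ ms_gt0.
have cmxnorm_ge0 (P : 'M[R[i]]_(bsz m s)) : 0 <= cmxnorm P.
  by apply: sumr_ge0 => i _; apply: sumr_ge0.
exists (c2 * cmxnorm (indicator a) * cmxnorm (indicator b)); split.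
  by rewrite !mulr_ge0 // ltW.
by move=> H; rewrite mulrAC; apply: c2_bound.
Qed.

Lemma blk_lim (F : 'M[W]_(bsz m s)) (A : nat -> 'M[W]_(bsz m s)) c K0 :
  (forall e, 0 < e -> exists K, forall k, (K <= k)%N -> N (F - A k) < e) ->
  (forall k, (K0 <= k)%N -> blk (A k) a b = c) -> blk F a b = c.
Proof.
move=> F_lim Ak_ab; have [K [K_ge0 K_bound]] := norm_blkmask_le.
have [N_norm _] := N_adm.
suff: blkmask F - blkmask (A K0) = 0.
  by move/subr0_eq => eq_mask; rewrite -blk_blkmask eq_mask blk_blkmask Ak_ab.
apply: (norm_eq0_small (N_norm _ ms_gt0)) => e e_gt0.
have K1_gt0 : 0 < K + 1 by rewrite ltr_wpDl.
have [k0 k0_lim] := F_lim _ (divr_gt0 e_gt0 K1_gt0).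
pose k := maxn k0 K0.
have -> : blkmask (A K0) = blkmask (A k).
  by apply: eq_blkmask; rewrite !Ak_ab // leq_maxr.
rewrite -blkmaskB; apply: (le_lt_trans (K_bound _)).
apply: (le_lt_trans (y := K * (e / (K + 1)))).
  by rewrite ler_wpM2l // ltW // k0_lim // leq_maxl.
rewrite mulrA ltr_pdivrMr // mulrC ltr_pM2l //.
by rewrite ltrDl.
Qed.

End BlockLimit.

Lemma finitely_open_line (R : realType) (U : lmodType R[i]) (O : ncsubset U) n
    (X E : 'M[U]_n) :
  finitely_open O -> (0 < n)%N -> O n X ->
  exists t : R[i], t != 0 /\ O n (X + scalemxl t E).
Proof.
move=> O_open n_gt0 OX; have [eps [eps_gt0 ball_eps]] := O_open _ _ 1%N (fun=> E) n_gt0 OX.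
have half_gt0 : 0 < eps / 2 by rewrite divr_gt0.
exists (eps / 2); split; first by rewrite gt_eqF.
have := ball_eps (fun=> eps / 2); rewrite big_ord1; apply => _.
by rewrite gtr0_norm // ltr_pdivrMr // ltr_pMr // ltr1n.
Qed.

Local Open Scope classical_set_scope.

Theorem theorem7p9 (R : realType) (V : lmodType R[i])
  (W : completeNormedModType R[i]) (N : forall n, 'M[W]_n -> R[i])
  (Omega : ncsubset V) (f : forall n, 'M[V]_n -> 'M[W]_n)
  (s : nat) (Y : 'M[V]_s) (Gamma : ncsubset V)
  (fl : forall l : nat, ('I_l -> 'M[V]_s) -> 'M[W]_s) :
  is_ncset Omega -> finitely_open Omega ->
  admissible N ->
  is_ncfun Omega f -> G_differentiable Omega f N ->
  (0 < s)%N -> Omega s Y ->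
  finitely_open Gamma -> (forall n, Gamma n `<=` Omega n) ->
  (forall m, (0 < m)%N -> Gamma (bsz m s) (dsumn m Y)) ->
  (forall l, multilinear (fl l)) ->
  (forall m (X : 'M[V]_(bsz m s)), (0 < m)%N -> Gamma (bsz m s) X ->
     forall eps : R[i], 0 < eps -> exists K : nat, forall k, (K <= k)%N ->
       N (bsz m s) (f (bsz m s) X -
         \sum_(l < k) odot_apply (X - dsumn m Y) (fl l)) < eps) ->
  forall (l : nat) (Z : 'I_l -> 'M[V]_s),
    (exists (S : 'M[R[i]]_(bsz l.+1 s)) (X : 'M[V]_(bsz l.+1 s)),
        S \in unitmx /\ Omega (bsz l.+1 s) X /\ bidiag Y Z = simil S X) /\
    (forall (S : 'M[R[i]]_(bsz l.+1 s)) (X : 'M[V]_(bsz l.+1 s)),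
        S \in unitmx -> Omega (bsz l.+1 s) X -> bidiag Y Z = simil S X ->
        fl l Z = blk (simil S (f (bsz l.+1 s) X)) ord0 ord_max).
Proof.
move=> _ _ N_adm [_ f_simil] _ s_gt0 _ Gamma_open Gamma_sub Gamma_Y fl_ml f_series l Z.
have n_gt0 : (0 < bsz l.+1 s)%N by rewrite /bsz sum_nat_const card_ord muln_gt0.
have [t [t_neq0 Gamma_Bt]] :=
  finitely_open_line (bidiag 0 Z) Gamma_open n_gt0 (Gamma_Y _ (ltn0Sn l)).
set Bt := _ + _ in Gamma_Bt.
pose D : 'M[R[i]]_(bsz l.+1 s) := blkscale l.+1 s t.
have D_unit : D \in unitmx by exact: blkscale_unit.
have D_bidiag : simil D (bidiag Y Z) = Bt by exact: simil_blkscale_bidiag.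
split.
  exists (invmx D), Bt; split; first by rewrite unitmx_inv.
  by split; [exact: Gamma_sub | rewrite -D_bidiag similK].
move=> S X S_unit OX bidiag_SX.
have f_Bt : f _ Bt = simil D (simil S (f _ X)).
  have DS_unit : D *m S \in unitmx by rewrite unitmx_mul D_unit.
  rewrite -D_bidiag bidiag_SX !similM // f_simil //.
  by rewrite -similM // -bidiag_SX D_bidiag; exact: Gamma_sub.
have Bt_corner : blk (f _ Bt) ord0 ord_max = scalemxl (t ^+ l) (fl l Z).
  apply: (blk_lim N_adm n_gt0 (f_series _ _ (ltn0Sn l) Gamma_Bt) (K0 := l.+1)).
  move=> k lt_lk; rewrite /Bt addrAC subrr add0r blk_sum (bigD1 (Ordinal lt_lk)) //=.
  rewrite odot_scale_bidiag0_corner // big1 ?addr0 //.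
  move=> j Nj; apply: odot_scale_bidiag0_corner_eq0 => //.
move: (blk_simil_blkscale t_neq0 (simil S (f _ X)) ord0 ord_max).
rewrite -f_Bt Bt_corner /= expr0 divr1.
have tl_neq0 : t ^+ l != 0 by rewrite expf_neq0.
by move/(can_inj (scalemxlK tl_neq0)).
Qed.
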